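(* Fix $0<r<1$ and $\alpha=r/\sqrt{1+r^2}$, $\beta=1/\sqrt{1+r^2}$. For $n\ge2$ let $\gamma_+^{(n)}=1-r^{2/n}$ and let $\gamma_-^{(n)}$ be the unique root in $(0,\gamma_+^{(n)})$ of $f_n(\gamma)=\alpha^2+\beta^2\gamma^n-\alpha\beta(1-\gamma)^{n/2}$. Then $\Delta_n:=\gamma_+^{(n)}-\gamma_-^{(n)}$ satisfies $$\Delta_n\le\frac2n\,r^{2/n-2}\bigl(\gamma_+^{(n)}\bigr)^n,$$ and consequently, with $\tau=\ln(1/r)$, $\Delta_n=O\!\left((2\tau)^n/n^{n+1}\right)$ as $n\to\infty$.
   Context: $[\gamma_-^{(n)},\gamma_+^{(n)}]$ is the stabilizer window of the amplitude-damped state $\mathcal E_\gamma^{\otimes n}(|\psi_n\rangle\langle\psi_n|)$, $|\psi_n\rangle=\alpha|0^n\rangle+\beta|1^n\rangle$. *)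

From Stdlib Require Export Reals.
Open Scope R_scope.

Definition alpha (r : R) : R := r / sqrt (1 + r ^ 2).
Definition beta (r : R) : R := 1 / sqrt (1 + r ^ 2).

Definition gamma_plus (r : R) (n : nat) : R := 1 - Rpower r (2 / INR n).

Definition f_n (r : R) (n : nat) (g : R) : R :=
  alpha r ^ 2 + beta r ^ 2 * g ^ n
  - alpha r * beta r * Rpower (1 - g) (INR n / 2).

Definition is_gamma_minus (r : R) (n : nat) (g : R) : Prop :=
  0 < g < gamma_plus r n /\ f_n r n g = 0.

(* At a root g of f_n the equation reads r^2 + g^n = r (1-g)^(n/2), while
   1 - gamma_+ = r^(2/n) is exactly the point where r (1-x)^(n/2) = r^2.  By the
   mean value theorem for x |-> x^(n/2) (convex since n/2 >= 1), the increment
   r (1-g)^(n/2) - r^2 dominates (n/2) r^(2-2/n) (gamma_+ - g); it equals g^n <= gamma_+^n,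
   which gives the bound on the gap.  The asymptotic form then follows from
   gamma_+ = 1 - exp(-2 tau/n) <= 2 tau/n and r^(2/n-2) <= r^-2. *)

From Stdlib Require Import Reals Lra Lia.
Open Scope R_scope.

Lemma Rpower_gt0 (x y : R) : 0 < Rpower x y.
Proof. exact (exp_pos _). Qed.

Lemma Rpower_inv_r (x y : R) : Rpower x (- y) * Rpower x y = 1.
Proof. rewrite Rpower_Ropp; apply Rinv_l, Rgt_not_eq, Rpower_gt0. Qed.

Lemma Rpower_root_pow (x : R) (n : nat) :
  0 < x -> (0 < n)%nat -> Rpower (Rpower x (2 / INR n)) (INR n / 2) = x.
Proof.
  intros hx hn; apply lt_0_INR in hn.
  rewrite Rpower_mult; replace (2 / INR n * (INR n / 2)) with 1 by (field; lra).
  exact (Rpower_1 x hx).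
Qed.

Lemma Rpower_sub_ge (a b m : R) :
  0 < a <= b -> 1 <= m -> m * Rpower a (m - 1) * (b - a) <= Rpower b m - Rpower a m.
Proof.
  intros [ha hab] hm; destruct (Req_dec a b) as [<- | hne].
  { rewrite !Rminus_diag; lra. }
  destruct (MVT_cor2 (fun t => Rpower t m) (fun t => m * Rpower t (m - 1)) a b)
    as [c [-> hc]]; [lra | intros c hc; apply derivable_pt_lim_power; lra |].
  assert (hmono : Rpower a (m - 1) <= Rpower c (m - 1)) by (apply Rle_Rpower_l; lra).
  apply Rmult_le_compat_r; [lra|]; apply Rmult_le_compat_l; lra.
Qed.

Lemma f_n_root_eq (r : R) (n : nat) (g : R) :
  f_n r n g = 0 -> r ^ 2 + g ^ n = r * Rpower (1 - g) (INR n / 2).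
Proof.
  unfold f_n, alpha, beta; intros hf.
  set (A := sqrt (1 + r ^ 2)) in hf.
  assert (hA0 : A <> 0) by (apply Rgt_not_eq, sqrt_lt_R0; nra).
  set (X := Rpower (1 - g) (INR n / 2)) in *.
  assert (e : A ^ 2 * ((r / A) ^ 2 + (1 / A) ^ 2 * g ^ n - r / A * (1 / A) * X)
             = r ^ 2 + g ^ n - r * X) by (field; exact hA0).
  rewrite hf, Rmult_0_r in e; lra.
Qed.

Lemma gamma_plus_gap_mul_le (r : R) (n : nat) (g : R) :
  0 < r -> (2 <= n)%nat -> is_gamma_minus r n g ->
  INR n / 2 * Rpower r (2 - 2 / INR n) * (gamma_plus r n - g) <= g ^ n.
Proof.
  intros hr hn [[g0 g1] hf].
  assert (hnR : 2 <= INR n) by (apply (le_INR 2); exact hn).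
  unfold gamma_plus in *.
  set (s := Rpower r (2 / INR n)) in *; set (m := INR n / 2).
  assert (hsm : Rpower s m = r) by (apply Rpower_root_pow; [exact hr | lia]).
  assert (hrs : r * Rpower s (m - 1) = Rpower r (2 - 2 / INR n)).
  { unfold s; rewrite Rpower_mult, <- (Rpower_1 r hr) at 1.
    rewrite <- Rpower_plus; f_equal; unfold m; field; lra. }
  assert (hincr : m * Rpower s (m - 1) * (1 - g - s) <= Rpower (1 - g) m - Rpower s m)
    by (apply Rpower_sub_ge; [split; [apply Rpower_gt0 | lra] | unfold m; lra]).
  rewrite hsm in hincr.
  apply f_n_root_eq in hf; fold m in hf.
  rewrite <- hrs.
  replace (1 - s - g) with (1 - g - s) by ring.
  apply Rmult_le_compat_l with (r := r) in hincr; lra.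
Qed.

Lemma gamma_plus_gap_le (r : R) (n : nat) (g : R) :
  0 < r -> (2 <= n)%nat -> is_gamma_minus r n g ->
  gamma_plus r n - g <= 2 / INR n * Rpower r (2 / INR n - 2) * gamma_plus r n ^ n.
Proof.
  intros hr hn hg.
  assert (hnR : 2 <= INR n) by (apply (le_INR 2); exact hn).
  pose proof (gamma_plus_gap_mul_le r n g hr hn hg) as hgap.
  destruct hg as [[g0 g1] _].
  set (P := Rpower r (2 / INR n - 2)); set (Q := Rpower r (2 - 2 / INR n)) in hgap.
  assert (hPQ : P * Q = 1).
  { unfold P, Q; replace (2 / INR n - 2) with (- (2 - 2 / INR n)) by ring.
    apply Rpower_inv_r. }
  assert (hcoef : 0 < 2 / INR n * P)
    by (apply Rmult_lt_0_compat; [apply Rdiv_lt_0_compat | apply Rpower_gt0]; lra).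
  assert (hpow : g ^ n <= gamma_plus r n ^ n) by (apply pow_incr; lra).
  replace (gamma_plus r n - g)
    with (2 / INR n * P * (INR n / 2 * Q * (gamma_plus r n - g)))
    by (transitivity ((P * Q) * (gamma_plus r n - g)); [field | rewrite hPQ; ring]; lra).
  apply Rmult_le_compat_l; lra.
Qed.

Lemma gamma_plus_le_log (r : R) (n : nat) :
  0 < r -> (0 < n)%nat -> gamma_plus r n <= 2 * ln (1 / r) / INR n.
Proof.
  intros hr hn; apply lt_0_INR in hn.
  unfold gamma_plus, Rpower, Rdiv; rewrite Rmult_1_l, ln_Rinv by exact hr.
  pose proof (exp_ineq1_le (2 * / INR n * ln r)); nra.
Qed.

Lemma Rpower_sub2_le (r y : R) :
  0 < r < 1 -> 0 <= y -> Rpower r (y - 2) <= / r ^ 2.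
Proof.
  intros hr hy.
  unfold Rminus; rewrite Rpower_plus, Rpower_Ropp.
  replace (Rpower r 2) with (r ^ 2)
    by (rewrite <- Rpower_pow by lra; f_equal; simpl; ring).
  assert (hry : Rpower r y <= 1).
  { replace 1 with (Rpower 1 y) by (unfold Rpower; rewrite ln_1, Rmult_0_r; apply exp_0).
    apply Rle_Rpower_l; lra. }
  assert (0 < / r ^ 2) by (apply Rinv_0_lt_compat, pow_lt; lra).
  nra.
Qed.

Theorem proposition3 (r : R) (hr : 0 < r < 1) :
  (forall (n : nat) (g : R), (2 <= n)%nat -> is_gamma_minus r n g ->
     gamma_plus r n - g
       <= 2 / INR n * Rpower r (2 / INR n - 2) * gamma_plus r n ^ n)
  /\
  (exists (C : R) (N : nat), forall (n : nat) (g : R),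
     (N <= n)%nat -> (2 <= n)%nat -> is_gamma_minus r n g ->
     Rabs (gamma_plus r n - g)
       <= C * ((2 * ln (1 / r)) ^ n / INR n ^ (n + 1))).
Proof.
  split; [intros n g; apply gamma_plus_gap_le; lra |].
  exists (2 / r ^ 2), 0%nat; intros n g _ hn hg.
  assert (hnR : 0 < INR n) by (apply lt_0_INR; lia).
  pose proof (gamma_plus_gap_le r n g (proj1 hr) hn hg) as hgap.
  destruct hg as [[g0 g1] _].
  rewrite Rabs_right by lra.
  assert (hP : Rpower r (2 / INR n - 2) <= / r ^ 2)
    by (apply Rpower_sub2_le; [exact hr | apply Rlt_le, Rdiv_lt_0_compat; lra]).
  assert (hpow : gamma_plus r n ^ n <= (2 * ln (1 / r) / INR n) ^ n)
    by (apply pow_incr; split; [lra | apply gamma_plus_le_log; [lra | lia]]).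
  apply Rle_trans with (2 / INR n * / r ^ 2 * (2 * ln (1 / r) / INR n) ^ n).
  - apply Rle_trans with (1 := hgap), Rmult_le_compat.
    + apply Rmult_le_pos; [apply Rlt_le, Rdiv_lt_0_compat | apply Rlt_le, Rpower_gt0]; lra.
    + apply pow_le; lra.
    + apply Rmult_le_compat_l; [apply Rlt_le, Rdiv_lt_0_compat |]; lra.
    + exact hpow.
  - right; unfold Rdiv; rewrite Rpow_mult_distr, pow_inv, pow_add, pow_1; field.
    repeat split; try apply pow_nonzero; lra.
Qed.
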